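(* Let $\mathcal{G}$ be the complete quadrilateral, let $R$ be a commutative ring with $2=0$ and let $A=M_R(\mathcal{G},1)$ (a free $R$-module of rank $6$). For each of the $4$ lines $\ell$ of $\mathcal{G}$, let $A^\ell_0$ and $A^\ell_1$ be the eigenspaces of $\operatorname{ad}_\ell$ for the eigenvalues $0$ and $1$. Then for each line $\ell$, $A=A^\ell_0\oplus A^\ell_1$ and \[ A^\ell_0A^\ell_0\subseteq A^\ell_0,\quad A^\ell_0A^\ell_1\subseteq A^\ell_1,\quad A^\ell_1A^\ell_1=0 , \] i.e. $A$ is a decomposition algebra with fusion law $0*0=\{0\}$, $0*1=1*0=\{1\}$, $1*1=\emptyset$. Moreover, the subspaces $A^\ell_1$ coincide for all $4$ choices of $\ell$.
   Context: The complete quadrilateral is the partial linear space with $6$ points $a,b,c,x,y,z$ and $4$ lines $\{a,b,c\}$, $\{a,y,z\}$, $\{b,x,z\}$, $\{c,x,y\}$ (the Fischer space of $\mathrm{Sym}(4)$ with its transpositions). For distinct collinear points $p,q$ (written $p\sim q$), $p\wedge q$ denotes the third point of their line. The nilpotent Matsuo algebra $A=M_R(\mathcal{G},1)$ is the free $R$-module with basis the points and commutative bilinear product $p\cdot q=0$ if $p=q$ or $p\not\sim q$, and $p\cdot q=p+q+p\wedge q$ if $p\sim q$. For a line $\ell$, we also write $\ell$ for the sum of its three points in $A$, and $\operatorname{ad}_\ell(v)=\ell v$; the eigenspace for $\lambda$ is $\{v:\ell v=\lambda v\}$. *)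

From HB Require Import structures.
From mathcomp Require Import all_boot all_order all_algebra.
Set Implicit Arguments. Unset Strict Implicit. Unset Printing Implicit Defensive.
Import GRing.Theory.
Local Open Scope ring_scope.

Definition pa : 'I_6 := @Ordinal 6 0 isT.
Definition pb : 'I_6 := @Ordinal 6 1 isT.
Definition pc : 'I_6 := @Ordinal 6 2 isT.
Definition px : 'I_6 := @Ordinal 6 3 isT.
Definition py : 'I_6 := @Ordinal 6 4 isT.
Definition pz : 'I_6 := @Ordinal 6 5 isT.

Definition cq_line (l : 'I_4) : {set 'I_6} :=
  match val l with
  | 0 => [set pa; pb; pc]
  | 1 => [set pa; py; pz]
  | 2 => [set pb; px; pz]
  | _ => [set pc; px; py]
  end.

Definition cq_coll (p q : 'I_6) : bool :=
  (p != q) && [exists l, (p \in cq_line l) && (q \in cq_line l)].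

(* p /\ q : third point on the line through p and q (only meaningful if p ~ q) *)
Definition cq_wedge (p q : 'I_6) : 'I_6 :=
  odflt p [pick r | [&& r != p, r != q &
     [exists l, [&& p \in cq_line l, q \in cq_line l & r \in cq_line l]]]].

(* The nilpotent Matsuo algebra M_R(G,1): free R-module on the points. *)
Notation matsuo R := {ffun 'I_6 -> R^o}.

Definition mbasis (R : comPzRingType) (p : 'I_6) : matsuo R :=
  [ffun r => (r == p)%:R].

Definition mprod_basis (R : comPzRingType) (p q : 'I_6) : matsuo R :=
  if cq_coll p q then mbasis R p + mbasis R q + mbasis R (cq_wedge p q) else 0.

Definition mmul (R : comPzRingType) (u v : matsuo R) : matsuo R :=
  \sum_(p : 'I_6) \sum_(q : 'I_6) (u p * v q) *: mprod_basis R p q.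

Definition line_elt (R : comPzRingType) (l : 'I_4) : matsuo R :=
  \sum_(p in cq_line l) mbasis R p.

Definition eigsp (R : comPzRingType) (l : 'I_4) (lam : R) (v : matsuo R) : Prop :=
  mmul (line_elt R l) v = lam *: v.

(* Over a ring with 2 = 0, ad_l is an idempotent derivation of A: the Leibniz rule
   ad_l (u v) = u (ad_l v) + (ad_l u) v holds, ad_l' o ad_l = ad_l for all lines l, l',
   and (ad_l u) (ad_l v) = 0.  Idempotence splits A as A_0 (+) A_1 with A_1 the image
   of ad_l, which is the same for every line since ad_l' fixes it; the Leibniz rule
   gives the products of A_0 with A_0 and with A_1; the last identity gives A_1 A_1 = 0.
   All three identities are bilinear, so they only need checking on basis vectors, where
   the structure constants are 0 or 1 and, as 2 = 0, the check is a computation over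
   F_2. *)

From HB Require Import structures.
From mathcomp Require Import all_boot all_order all_algebra.
Import GRing.Theory.
Local Open Scope ring_scope.
Set Implicit Arguments. Unset Strict Implicit. Unset Printing Implicit Defensive.

Notation ad l := (mmul (line_elt _ l)).

Definition lines : seq 'I_4 :=
  [:: @Ordinal 4 0 isT; @Ordinal 4 1 isT; @Ordinal 4 2 isT; @Ordinal 4 3 isT].
Definition points : seq 'I_6 := [:: pa; pb; pc; px; py; pz].

Lemma all_linesP (P : pred 'I_4) : all P lines -> forall l, P l.
Proof. by move/allP=> allP [[|[|[|[|//]]]] ?]; apply: allP. Qed.

Lemma all_pointsP (P : pred 'I_6) : all P points -> forall p, P p.
Proof. by move/allP=> allP [[|[|[|[|[|[|//]]]]]] ?]; apply: allP. Qed.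

Lemma sum_points (V : nmodType) (F : 'I_6 -> V) :
  \sum_p F p = F pa + F pb + F pc + F px + F py + F pz.
Proof.
rewrite !big_ord_recl big_ord0 addr0 !addrA.
by congr (_ + _ + _ + _ + _ + _); congr F; apply: val_inj.
Qed.

Definition on_line (l : 'I_4) (p : 'I_6) : bool :=
  match val l, val p with
  | 0, (0 | 1 | 2) | 1, (0 | 4 | 5) | 2, (1 | 3 | 5) | 3, (2 | 3 | 4) => true
  | _, _ => false
  end.

Lemma in_cq_line l p : (p \in cq_line l) = on_line l p.
Proof.
by case: l => [[|[|[|[|//]]]] ?]; case: p => [[|[|[|[|[|[|//]]]]]] ?]; rewrite !inE.
Qed.

Lemma exists_lines (P : pred 'I_4) : [exists l, P l] = has P lines.
Proof.
apply/existsP/hasP => [[l Pl]|[l _ Pl]]; last by exists l.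
by exists l => //; apply: (all_linesP (P := mem lines)).
Qed.

Definition collinear (p q : 'I_6) : bool :=
  (p != q) && has (fun l => on_line l p && on_line l q) lines.

Definition third_point_of (p q r : 'I_6) : bool :=
  [&& r != p, r != q & has (fun l => [&& on_line l p, on_line l q & on_line l r]) lines].

Definition third (p q : 'I_6) : 'I_6 := nth p points (find (third_point_of p q) points).

Lemma cq_collE p q : cq_coll p q = collinear p q.
Proof.
by rewrite /cq_coll exists_lines; congr (_ && _); apply: eq_has => l; rewrite !in_cq_line.
Qed.

Lemma third_point_of_check :
  all (fun p => all (fun q => collinear p q ==>
    all (fun r => third_point_of p q r == (r == third p q)) points) points) points.
Proof. by vm_compute. Qed.

Lemma third_point_ofE p q r : collinear p q -> third_point_of p q r = (r == third p q).
Proof.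
move=> pq; apply/eqP; move: r; apply: all_pointsP.
exact: implyP (all_pointsP (all_pointsP third_point_of_check p) q) pq.
Qed.

Lemma cq_wedgeE p q : collinear p q -> cq_wedge p q = third p q.
Proof.
move=> pq; rewrite /cq_wedge (@eq_pick _ _ (third_point_of p q)) => [|r]; last first.
  rewrite /third_point_of exists_lines; congr [&& _, _ & _].
  by apply: eq_has => l; rewrite !in_cq_line.
by case: pickP => [r|/(_ (third p q))]; rewrite third_point_ofE ?eqxx // => /eqP.
Qed.

Section Linearity.
Variable R : comPzRingType.
Implicit Types (u v : matsuo R) (p : 'I_6).

Lemma matsuo_expand v : v = \sum_p v p *: mbasis R p.
Proof.
apply/ffunP => r; rewrite sum_ffunE (bigD1 r) //= big1 => [|p /negbTE pr].
  by rewrite !ffunE eqxx addr0 [_ *: _]mulr1.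
by rewrite !ffunE eq_sym pr [_ *: _]mulr0.
Qed.

Lemma eq_linear_mbasis (f g : matsuo R -> matsuo R) :
  linear f -> linear g -> (forall p, f (mbasis R p) = g (mbasis R p)) -> f =1 g.
Proof.
move=> f_lin g_lin fg v; rewrite (matsuo_expand v).
pose fL : {linear matsuo R -> matsuo R} := HB.pack f (GRing.isLinear.Build _ _ _ _ f f_lin).
pose gL : {linear matsuo R -> matsuo R} := HB.pack g (GRing.isLinear.Build _ _ _ _ g g_lin).
rewrite -[f]/(fL : _ -> _) -[g]/(gL : _ -> _) !linear_sum.
by apply: eq_bigr => p _; rewrite !linearZ /= fg.
Qed.

Lemma mmul_is_linear u : linear (mmul u).
Proof.
move=> a v w; rewrite /mmul scaler_sumr -big_split; apply: eq_bigr => p _ /=.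
rewrite scaler_sumr -big_split; apply: eq_bigr => q _ /=.
by rewrite !ffunE scalerA -scalerDl -[a *: v q]/(a * v q) mulrDr mulrCA.
Qed.

HB.instance Definition _ u :=
  GRing.isLinear.Build R (matsuo R) (matsuo R) *:%R (mmul u) (mmul_is_linear u).

Lemma mmulPl v a u w : mmul (a *: u + w) v = a *: mmul u v + mmul w v.
Proof.
rewrite /mmul scaler_sumr -big_split; apply: eq_bigr => p _ /=.
rewrite scaler_sumr -big_split; apply: eq_bigr => q _ /=.
by rewrite !ffunE scalerA -scalerDl -[a *: u p]/(a * u p) mulrDl mulrA.
Qed.

Lemma mmul0l v : mmul 0 v = 0.
Proof.
by rewrite /mmul big1 // => p _; rewrite big1 // => q _; rewrite ffunE mul0r scale0r.
Qed.

End Linearity.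

(* Vectors over F_2 = bool, stored as the list of their coordinates at [points] so that
   [vm_compute] evaluates each product only once. *)
Definition bvec := seq bool.
Definition bcoord (f : bvec) (r : 'I_6) : bool := nth false f r.
Definition bvec_of (F : 'I_6 -> bool) : bvec := [seq F r | r <- points].

Definition bsum (F : 'I_6 -> bool) : bool := foldr (fun p b => F p (+) b) false points.

Definition bprod (p q r : 'I_6) : bool :=
  collinear p q && ((r == p) (+) (r == q) (+) (r == third p q)).

(* [if] rather than [&&]: under call-by-value evaluation this skips the inner sum
   whenever a coordinate of [f] vanishes. *)
Definition bmul (f g : bvec) : bvec := bvec_of (fun r => bsum (fun p =>
  if bcoord f p then bsum (fun q => if bcoord g q then bprod p q r else false) else false)).

Definition badd (f g : bvec) : bvec := bvec_of (fun r => bcoord f r (+) bcoord g r).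
Definition bline (l : 'I_4) : bvec := bvec_of (on_line l).
Definition bad (l : 'I_4) : bvec -> bvec := bmul (bline l).
Definition bbasis (p : 'I_6) : bvec := bvec_of (fun r => r == p).

Lemma bad_bad_basis :
  all (fun l => all (fun l' => all (fun p =>
    bad l' (bad l (bbasis p)) == bad l (bbasis p)) points) lines) lines.
Proof. by vm_compute. Qed.

Lemma bmul_bad_basis :
  all (fun l => all (fun p => all (fun q =>
    bmul (bad l (bbasis p)) (bad l (bbasis q)) == bvec_of (fun=> false)) points) points) lines.
Proof. by vm_compute. Qed.

Lemma bad_derivation_basis :
  all (fun l => all (fun p => all (fun q =>
    bad l (bmul (bbasis p) (bbasis q)) ==
    badd (bmul (bbasis p) (bad l (bbasis q))) (bmul (bad l (bbasis p)) (bbasis q)))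
    points) points) lines.
Proof. by vm_compute. Qed.

Lemma bcoord_bvec_of F r : bcoord (bvec_of F) r = F r.
Proof. by case: r => [[|[|[|[|[|[|//]]]]]] ?] /=; congr F; apply: val_inj. Qed.

Section Char2.
Variable R : comPzRingType.
Hypothesis char2 : (2%:R : R) = 0.
Implicit Types (f g : bvec) (u v : matsuo R).

Definition of_bvec (f : bvec) : matsuo R := [ffun r => (bcoord f r)%:R].

Lemma natr_addb a b : ((a (+) b)%:R : R) = a%:R + b%:R.
Proof. by case: a; case: b; rewrite ?addr0 ?add0r // -char2. Qed.

Lemma natr_bsum F : ((bsum F)%:R : R) = \sum_p (F p)%:R.
Proof. by rewrite sum_points /bsum /= !natr_addb addr0 !addrA. Qed.

Lemma of_bvecD f g : of_bvec f + of_bvec g = of_bvec (badd f g).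
Proof. by apply/ffunP => r; rewrite !ffunE bcoord_bvec_of natr_addb. Qed.

Lemma of_bvec0 : of_bvec (bvec_of (fun=> false)) = 0.
Proof. by apply/ffunP => r; rewrite !ffunE bcoord_bvec_of. Qed.

Lemma mbasisE p : mbasis R p = of_bvec (bbasis p).
Proof. by apply/ffunP => r; rewrite !ffunE bcoord_bvec_of. Qed.

Lemma line_eltE l : line_elt R l = of_bvec (bline l).
Proof.
apply/ffunP => r; rewrite sum_ffunE !ffunE bcoord_bvec_of -in_cq_line.
case: (boolP (r \in cq_line l)) => rl.
  rewrite (bigD1 r) //= big1 => [|p /andP[_ pr]]; rewrite !ffunE ?eqxx ?addr0 //.
  by rewrite eq_sym (negbTE pr).
by rewrite big1 // => p pl; rewrite ffunE; case: eqP => // rp; rewrite rp pl in rl.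
Qed.

Lemma mprod_basisE p q r : mprod_basis R p q r = (bprod p q r)%:R.
Proof.
rewrite /mprod_basis /bprod cq_collE; case: ifP => [pq|_]; last by rewrite ffunE.
by rewrite (cq_wedgeE pq) !ffunE !natr_addb.
Qed.

Lemma mmul_of_bvec f g : mmul (of_bvec f) (of_bvec g) = of_bvec (bmul f g).
Proof.
apply/ffunP => r; rewrite sum_ffunE !ffunE bcoord_bvec_of natr_bsum.
apply: eq_bigr => p _; rewrite sum_ffunE !ffunE; case: (bcoord f p); last first.
  by rewrite big1 // => q _; rewrite !ffunE mul0r scale0r.
rewrite natr_bsum; apply: eq_bigr => q _; rewrite !ffunE mprod_basisE mul1r.
by case: (bcoord g q); rewrite /= ?scale1r ?scale0r.
Qed.

Lemma ad_of_bvec l f : ad l (of_bvec f) = of_bvec (bad l f).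
Proof. by rewrite line_eltE mmul_of_bvec. Qed.

Lemma ad_ad l l' v : ad l' (ad l v) = ad l v.
Proof.
move: v; apply: eq_linear_mbasis => [a u w|a u w|p] /=; rewrite ?linearP //.
rewrite mbasisE !ad_of_bvec; congr of_bvec; apply/eqP.
exact: all_pointsP (all_linesP (all_linesP bad_bad_basis l) l') p.
Qed.

Lemma mmul_ad_ad l u v : mmul (ad l u) (ad l v) = 0.
Proof.
move: u; apply: eq_linear_mbasis => [a u w|a u w|p] /=.
- by rewrite linearP mmulPl.
- by rewrite scaler0 addr0.
move: v; apply: eq_linear_mbasis => [a v w|a v w|q] /=.
- by rewrite !linearP.
- by rewrite scaler0 addr0.
rewrite !mbasisE !ad_of_bvec mmul_of_bvec -of_bvec0; congr of_bvec; apply/eqP.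
exact: all_pointsP (all_pointsP (all_linesP bmul_bad_basis l) p) q.
Qed.

Lemma ad_mmul l u v : ad l (mmul u v) = mmul u (ad l v) + mmul (ad l u) v.
Proof.
move: u; apply: eq_linear_mbasis => [a u w|a u w|p] /=.
- by rewrite mmulPl linearP.
- by rewrite mmulPl linearP mmulPl scalerDr addrACA.
move: v; apply: eq_linear_mbasis => [a v w|a v w|q] /=.
- by rewrite !linearP.
- by rewrite !linearP scalerDr addrACA.
rewrite !mbasisE !(mmul_of_bvec, ad_of_bvec) of_bvecD; congr of_bvec; apply/eqP.
exact: all_pointsP (all_pointsP (all_linesP bad_derivation_basis l) p) q.
Qed.

End Char2.

Lemma eigsp0 (R : comPzRingType) l (v : matsuo R) : eigsp l 0 v <-> ad l v = 0.
Proof. by rewrite /eigsp scale0r. Qed.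

Lemma eigsp1 (R : comPzRingType) l (v : matsuo R) : eigsp l 1 v <-> ad l v = v.
Proof. by rewrite /eigsp scale1r. Qed.

Theorem theorem5p14 (R : comPzRingType) (h2 : (2%:R : R) = 0) :
  (forall l : 'I_4,
     (* A = A_0 (+) A_1 *)
     (forall v : matsuo R, exists v0 v1 : matsuo R,
        [/\ eigsp l 0 v0, eigsp l 1 v1 & v = v0 + v1]) /\
     (forall v : matsuo R, eigsp l 0 v -> eigsp l 1 v -> v = 0) /\
     (* fusion law *)
     (forall u v : matsuo R, eigsp l 0 u -> eigsp l 0 v -> eigsp l 0 (mmul u v)) /\
     (forall u v : matsuo R, eigsp l 0 u -> eigsp l 1 v -> eigsp l 1 (mmul u v)) /\
     (forall u v : matsuo R, eigsp l 1 u -> eigsp l 0 v -> eigsp l 1 (mmul u v)) /\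
     (forall u v : matsuo R, eigsp l 1 u -> eigsp l 1 v -> mmul u v = 0)) /\
  (* the 1-eigenspaces coincide *)
  (forall (l l' : 'I_4) (v : matsuo R), eigsp l 1 v <-> eigsp l' 1 v).
Proof.
split=> [l|l l' v]; last first.
  by split=> /eigsp1 v1; apply/eigsp1; rewrite -v1 (ad_ad h2).
split; last split; last split; last split; last split.
- move=> v; exists (v - ad l v), (ad l v); split; last by rewrite subrK.
    by apply/eigsp0; rewrite linearB /= (ad_ad h2) subrr.
  by apply/eigsp1; rewrite (ad_ad h2).
- by move=> v /eigsp0 v0 /eigsp1 v1; rewrite -v1 v0.
- move=> u v /eigsp0 u0 /eigsp0 v0; apply/eigsp0.
  by rewrite (ad_mmul h2) u0 v0 linear0 mmul0l addr0.
- move=> u v /eigsp0 u0 /eigsp1 v1; apply/eigsp1.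
  by rewrite (ad_mmul h2) u0 v1 mmul0l addr0.
- move=> u v /eigsp1 u1 /eigsp0 v0; apply/eigsp1.
  by rewrite (ad_mmul h2) u1 v0 linear0 add0r.
- by move=> u v /eigsp1 u1 /eigsp1 v1; rewrite -u1 -v1 (mmul_ad_ad h2).
Qed.
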